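(* Fix $\varepsilon\in\{1,-1\}$ and $m\in\mathbb{R}$. Let $I\subset\mathbb{R}$ be an open interval, $A:I\to\mathrm{SL}(2,\mathbb{C})$ and $h:I\to\mathbb{R}$ smooth maps, and let $y:I\to Y$, $y(s)=(A(s);h(s),h'(s),h''(s))$. Then $y$ is an integral curve of the Euler--Lagrange system $(\mathcal{J},\omega)$ with $y^{\ast}\omega=ds$ if and only if \[ A^{-1}A' = H(h) \quad\text{and}\quad \frac{d}{ds}\,U(h,h',h'') = \left[\,U(h,h',h''),\,H(h)\,\right] \quad\text{on } I . \]
   Context: For $h\in\mathbb{R}$ put $H(h)=\begin{pmatrix}0&\varepsilon\\ 2\varepsilon h+\frac{m}{3}+i&0\end{pmatrix}\in\mathfrak{sl}(2,\mathbb{C})$, and for $(h,h_1,h_2)\in\mathbb{R}^3$ put \[ U(h,h_1,h_2)=\begin{pmatrix} i h_1 & 2i\varepsilon\left(h-\varepsilon\left(\frac{m}{3}+i\right)\right)\\[2pt] 2\left(h+\frac{2\varepsilon m}{3}\right)-i\varepsilon\left(h_2-4h^2+\frac{2\varepsilon m h}{3}+\frac{2m^2}{9}-2\right) & -ih_1\end{pmatrix}. \] The momentum space is $Y=\mathrm{SL}(2,\mathbb{C})\times\mathbb{R}^3$ with coordinates $(A;h,h_1,h_2)$. Write the Maurer--Cartan form of $\mathrm{SL}(2,\mathbb{C})$ (pulled back to $Y$) as $A^{-1}dA=\alpha+i\beta$ with $\alpha=\begin{pmatrix}\alpha^1_1&\alpha^1_2\\ \alpha^2_1&-\alpha^1_1\end{pmatrix}$,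 $\beta=\begin{pmatrix}\beta^1_1&\beta^1_2\\ \beta^2_1&-\beta^1_1\end{pmatrix}$ real-valued. Let $\omega=\beta^2_1$. The Euler--Lagrange system $(\mathcal{J},\omega)$ is the Pfaffian system on $Y$ generated by the 1-forms $\beta^1_1$, $\beta^1_2$, $\alpha^1_1$, $\alpha^1_2-\varepsilon\omega$, $\alpha^2_1-(2\varepsilon h+\frac{m}{3})\omega$, $dh-h_1\omega$, $dh_1-h_2\omega$, $dh_2-12hh_1\omega$, with independence condition $\omega\neq0$. An integral curve is a smooth curve $y$ in $Y$ on which all these generators pull back to zero and $y^\ast\omega$ vanishes nowhere. (These integral curves correspond to extremals of the functional $\int(m+k)\omega$ on null curves in de Sitter 3-space, with $h=\frac{\varepsilon}{2}(k-\frac{m}{3})$.) *)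

From Stdlib Require Import Reals.
From Coquelicot Require Import Coquelicot.
Open Scope R_scope.

Definition nonempty_open_interval (a b : Rbar) : Prop := Rbar_lt a b.
Definition in_I (a b : Rbar) (s : R) : Prop := Rbar_lt a s /\ Rbar_lt s b.

Definition smooth_on (a b : Rbar) (f : R -> R) : Prop :=
  forall (n : nat) (s : R), in_I a b s -> ex_derive_n f n s.

Record M2 := mkM2 { m11 : C; m12 : C; m21 : C; m22 : C }.

Definition M2det (X : M2) : C := Cminus (Cmult (m11 X) (m22 X)) (Cmult (m12 X) (m21 X)).
Definition M2mul (X Y : M2) : M2 :=
  mkM2 (Cplus (Cmult (m11 X) (m11 Y)) (Cmult (m12 X) (m21 Y)))
       (Cplus (Cmult (m11 X) (m12 Y)) (Cmult (m12 X) (m22 Y)))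
       (Cplus (Cmult (m21 X) (m11 Y)) (Cmult (m22 X) (m21 Y)))
       (Cplus (Cmult (m21 X) (m12 Y)) (Cmult (m22 X) (m22 Y))).
Definition M2sub (X Y : M2) : M2 :=
  mkM2 (Cminus (m11 X) (m11 Y)) (Cminus (m12 X) (m12 Y))
       (Cminus (m21 X) (m21 Y)) (Cminus (m22 X) (m22 Y)).
Definition M2inv (X : M2) : M2 :=
  let d := Cinv (M2det X) in
  mkM2 (Cmult d (m22 X)) (Cmult d (Copp (m12 X)))
       (Cmult d (Copp (m21 X))) (Cmult d (m11 X)).
Definition M2bracket (X Y : M2) : M2 := M2sub (M2mul X Y) (M2mul Y X).

Definition CDerive (f : R -> C) (s : R) : C :=
  (Derive (fun t => fst (f t)) s, Derive (fun t => snd (f t)) s).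
Definition M2Derive (A : R -> M2) (s : R) : M2 :=
  mkM2 (CDerive (fun t => m11 (A t)) s) (CDerive (fun t => m12 (A t)) s)
       (CDerive (fun t => m21 (A t)) s) (CDerive (fun t => m22 (A t)) s).

Definition smoothC_on (a b : Rbar) (f : R -> C) : Prop :=
  smooth_on a b (fun t => fst (f t)) /\ smooth_on a b (fun t => snd (f t)).
Definition smoothM2_on (a b : Rbar) (A : R -> M2) : Prop :=
  smoothC_on a b (fun t => m11 (A t)) /\ smoothC_on a b (fun t => m12 (A t)) /\
  smoothC_on a b (fun t => m21 (A t)) /\ smoothC_on a b (fun t => m22 (A t)).

(* pullback of the Maurer-Cartan form A^{-1} dA along the curve: A(s)^{-1} A'(s) ds;
   alpha = Re, beta = Im (entrywise). *)
Definition MC (A : R -> M2) (s : R) : M2 := M2mul (M2inv (A s)) (M2Derive A s).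

Definition Hmat (eps m h : R) : M2 :=
  mkM2 (RtoC 0) (RtoC eps) (Cplus (RtoC (2 * eps * h + m / 3)) Ci) (RtoC 0).

Definition Umat (eps m h h1 h2 : R) : M2 :=
  mkM2 (Cmult Ci (RtoC h1))
       (Cmult (Cmult (RtoC 2) (Cmult Ci (RtoC eps)))
              (Cminus (RtoC h) (Cmult (RtoC eps) (Cplus (RtoC (m / 3)) Ci))))
       (Cminus (RtoC (2 * (h + 2 * eps * m / 3)))
               (Cmult (Cmult Ci (RtoC eps))
                      (RtoC (h2 - 4 * h ^ 2 + 2 * eps * m * h / 3 + 2 * m ^ 2 / 9 - 2))))
       (Copp (Cmult Ci (RtoC h1))).

(* A curve y(s) = (A(s); h(s), h1(s), h2(s)) in Y = SL(2,C) x R^3, defined on ]a,b[,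
   is an integral curve of the Euler-Lagrange system (J, omega): y is smooth, takes
   values in Y, all generators of J pull back to zero and y^* omega vanishes nowhere.
   The pullback of a 1-form along y is written as its coefficient of ds. *)
Definition integral_curve (eps m : R) (a b : Rbar)
    (A : R -> M2) (h h1 h2 : R -> R) : Prop :=
  smoothM2_on a b A /\ smooth_on a b h /\ smooth_on a b h1 /\ smooth_on a b h2 /\
  forall s, in_I a b s ->
    let X := MC A s in
    let omega := snd (m21 X) in                     (* y^* beta^2_1 *)
    M2det (A s) = RtoC 1 /\
    snd (m11 X) = 0 /\
    snd (m12 X) = 0 /\
    fst (m11 X) = 0 /\
    fst (m12 X) - eps * omega = 0 /\
    fst (m21 X) - (2 * eps * h s + m / 3) * omega = 0 /\
    Derive h s - h1 s * omega = 0 /\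
    Derive h1 s - h2 s * omega = 0 /\
    Derive h2 s - 12 * h s * h1 s * omega = 0 /\
    omega <> 0.

From Stdlib Require Import Reals Lra.
From Coquelicot Require Import Coquelicot.
Open Scope R_scope.

(* Along a curve with [y^* omega = ds], the generators of [J] containing
   [alpha] and [beta] fix every entry of [A^{-1} A'] except [a22], and
   [det A = 1] forces [A^{-1} A'] to be traceless (Jacobi's formula), so these
   generators say exactly [A^{-1} A' = H(h)]. The remaining generators say
   [h1 = h'], [h2 = h''] and [h''' = 12 h h'], and entry by entry the Lax
   equation [U' = [U, H]] is the same third-order equation. *)

Lemma smooth_on_ex_derive a b f s : smooth_on a b f -> in_I a b s -> ex_derive f s.
Proof. intros Hf Hs. exact (Hf 1%nat s Hs). Qed.

Lemma smooth_on_Derive a b f : smooth_on a b f -> smooth_on a b (Derive f).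
Proof.
intros Hf [|n] s Hs; [exact I|].
apply (ex_derive_ext (Derive_n f (S n))); [|exact (Hf (S (S n)) s Hs)].
intro t. rewrite <- Nat.add_1_r. symmetry. exact (Derive_n_comp f n 1 t).
Qed.

Lemma in_I_locally a b s : in_I a b s -> locally s (in_I a b).
Proof.
intros [Ha Hb]. apply filter_and; [apply open_Rbar_gt | apply open_Rbar_lt]; assumption.
Qed.

Definition is_CDerive (f : R -> C) (s : R) (l : C) : Prop :=
  is_derive (fun t => fst (f t)) s (fst l) /\ is_derive (fun t => snd (f t)) s (snd l).

Lemma is_CDerive_unique f s l l' : is_CDerive f s l -> is_CDerive f s l' -> l = l'.
Proof.
intros [H1 H2] [H1' H2'].
apply injective_projections.
- now rewrite <- (is_derive_unique _ _ _ H1), <- (is_derive_unique _ _ _ H1').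
- now rewrite <- (is_derive_unique _ _ _ H2), <- (is_derive_unique _ _ _ H2').
Qed.

Lemma is_CDerive_locally_const f c s : locally s (fun t => f t = c) -> is_CDerive f s (RtoC 0).
Proof.
intros Hc. split.
- apply (is_derive_ext_loc (fun _ => fst c)); [|exact (is_derive_const _ s)].
  apply (filter_imp (fun t => f t = c)); [intros t ->; reflexivity | exact Hc].
- apply (is_derive_ext_loc (fun _ => snd c)); [|exact (is_derive_const _ s)].
  apply (filter_imp (fun t => f t = c)); [intros t ->; reflexivity | exact Hc].
Qed.

Lemma smoothC_on_is_CDerive a b f s : smoothC_on a b f -> in_I a b s -> is_CDerive f s (CDerive f s).
Proof. intros [H1 H2] Hs. split; apply Derive_correct; eapply smooth_on_ex_derive; eassumption. Qed.

Lemma is_derive_Rmult (f g : R -> R) s lf lg : is_derive f s lf -> is_derive g s lg ->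
  is_derive (fun t => f t * g t) s (lf * g s + f s * lg).
Proof. intros Hf Hg. exact (is_derive_mult f g s lf lg Hf Hg Rmult_comm). Qed.

Lemma is_derive_Rminus (f g : R -> R) s lf lg : is_derive f s lf -> is_derive g s lg ->
  is_derive (fun t => f t - g t) s (lf - lg).
Proof. exact (is_derive_minus f g s lf lg). Qed.

Lemma is_derive_Rplus (f g : R -> R) s lf lg : is_derive f s lf -> is_derive g s lg ->
  is_derive (fun t => f t + g t) s (lf + lg).
Proof. exact (is_derive_plus f g s lf lg). Qed.

Lemma is_CDerive_mult f g s lf lg : is_CDerive f s lf -> is_CDerive g s lg ->
  is_CDerive (fun t => Cmult (f t) (g t)) s (Cplus (Cmult lf (g s)) (Cmult (f s) lg)).
Proof.
intros [Hf1 Hf2] [Hg1 Hg2]. split; unfold Cmult, Cplus; cbn [fst snd].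
- replace (_ + _) with ((fst lf * fst (g s) + fst (f s) * fst lg)
                       - (snd lf * snd (g s) + snd (f s) * snd lg)) by ring.
  apply is_derive_Rminus; apply is_derive_Rmult; assumption.
- replace (_ + _) with ((fst lf * snd (g s) + fst (f s) * snd lg)
                       + (snd lf * fst (g s) + snd (f s) * fst lg)) by ring.
  apply is_derive_Rplus; apply is_derive_Rmult; assumption.
Qed.

Lemma is_CDerive_minus f g s lf lg : is_CDerive f s lf -> is_CDerive g s lg ->
  is_CDerive (fun t => Cminus (f t) (g t)) s (Cminus lf lg).
Proof.
intros [Hf1 Hf2] [Hg1 Hg2].
split; [exact (is_derive_Rminus _ _ _ _ _ Hf1 Hg1) | exact (is_derive_Rminus _ _ _ _ _ Hf2 Hg2)].
Qed.

Lemma is_CDerive_M2det_trace_MC a b A s : smoothM2_on a b A -> in_I a b s -> M2det (A s) = RtoC 1 ->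
  is_CDerive (fun t => M2det (A t)) s (Cplus (m11 (MC A s)) (m22 (MC A s))).
Proof.
intros (H11 & H12 & H21 & H22) Hs Hdet.
apply smoothC_on_is_CDerive with (s := s) in H11, H12, H21, H22; try exact Hs.
pose proof (is_CDerive_minus _ _ _ _ _ (is_CDerive_mult _ _ _ _ _ H11 H22)
                                      (is_CDerive_mult _ _ _ _ _ H12 H21)) as Hd.
(* With [det A = 1] the inverse of [A] is its adjugate, and the trace of
   [adj(A) A'] is the product-rule expansion of [(det A)']. *)
replace (Cplus _ _) with
  (Cminus (Cplus (Cmult (CDerive (fun t => m11 (A t)) s) (m22 (A s)))
                 (Cmult (m11 (A s)) (CDerive (fun t => m22 (A t)) s)))
          (Cplus (Cmult (CDerive (fun t => m12 (A t)) s) (m21 (A s)))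
                 (Cmult (m12 (A s)) (CDerive (fun t => m21 (A t)) s)))); [exact Hd |].
unfold MC, M2mul, M2inv, M2Derive. rewrite Hdet. cbn [m11 m12 m21 m22].
field.
Qed.

Lemma trace_MC_eq0 a b A s : (forall t, in_I a b t -> M2det (A t) = RtoC 1) ->
  smoothM2_on a b A -> in_I a b s -> Cplus (m11 (MC A s)) (m22 (MC A s)) = RtoC 0.
Proof.
intros Hdet HA Hs.
apply (is_CDerive_unique (fun t => M2det (A t)) s).
- exact (is_CDerive_M2det_trace_MC a b A s HA Hs (Hdet s Hs)).
- apply is_CDerive_locally_const with (c := RtoC 1).
  apply (filter_imp (in_I a b)); [exact Hdet | exact (in_I_locally a b s Hs)].
Qed.

Lemma eq_Hmat_iff eps m h X :
  X = Hmat eps m h <->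
  Cplus (m11 X) (m22 X) = RtoC 0 /\
  snd (m11 X) = 0 /\ snd (m12 X) = 0 /\ fst (m11 X) = 0 /\
  fst (m12 X) - eps * snd (m21 X) = 0 /\
  fst (m21 X) - (2 * eps * h + m / 3) * snd (m21 X) = 0 /\
  snd (m21 X) = 1.
Proof.
split.
- intros ->. unfold Hmat, Cplus, RtoC, Ci; cbn [fst snd m11 m12 m21 m22].
  repeat split; try (f_equal; ring); ring.
- destruct X as [[x11 y11] [x12 y12] [x21 y21] [x22 y22]].
  unfold Hmat, Cplus, RtoC, Ci; cbn [fst snd m11 m12 m21 m22].
  intros (Htr & H1 & H2 & H3 & H4 & H5 & ->). injection Htr as Htr1 Htr2.
  f_equal; f_equal; lra.
Qed.

Lemma M2bracket_Umat_Hmat eps m p q r : eps = 1 \/ eps = -1 ->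
  M2bracket (Umat eps m p q r) (Hmat eps m p) =
  mkM2 (0, r) (0, 2 * eps * q) (2 * q, - eps * (4 * p * q + 2 * eps * m * q / 3)) (0, - r).
Proof.
intros Heps.
unfold M2bracket, M2sub, M2mul, Umat, Hmat, Cminus, Cmult, Cplus, Copp, RtoC, Ci.
cbn [fst snd m11 m12 m21 m22].
destruct Heps as [-> | ->]; f_equal; f_equal; field.
Qed.

Lemma M2Derive_Umat eps m (p q r : R -> R) s :
  ex_derive p s -> ex_derive q s -> ex_derive r s ->
  M2Derive (fun t => Umat eps m (p t) (q t) (r t)) s =
  mkM2 (0, Derive q s) (0, 2 * eps * Derive p s)
    (2 * Derive p s, - eps * (Derive r s - 8 * p s * Derive p s + 2 * eps * m * Derive p s / 3))
    (0, - Derive q s).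
Proof.
intros Hp Hq Hr.
unfold M2Derive, CDerive, Umat, Cminus, Cmult, Cplus, Copp, RtoC, Ci.
cbn [fst snd m11 m12 m21 m22].
f_equal; f_equal; apply is_derive_unique; auto_derive; repeat split; auto.
(* [auto_derive] produces [Derive (fun x => p x) s]; [set] folds it up to eta. *)
all: set (Dp := Derive p s); set (Dq := Derive q s); set (Dr := Derive r s); field.
Qed.

Lemma M2Derive_Umat_eq_bracket_iff eps m (p q r : R -> R) s : eps = 1 \/ eps = -1 ->
  ex_derive p s -> ex_derive q s -> ex_derive r s ->
  M2Derive (fun t => Umat eps m (p t) (q t) (r t)) s
    = M2bracket (Umat eps m (p s) (q s) (r s)) (Hmat eps m (p s))
  <-> Derive p s = q s /\ Derive q s = r s /\ Derive r s = 12 * p s * q s.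
Proof.
intros Heps Hp Hq Hr.
rewrite M2Derive_Umat, M2bracket_Umat_Hmat by assumption.
split.
- intros E. injection E as E1 _ E3 E4 _.
  assert (Hpq : Derive p s = q s) by lra.
  rewrite Hpq in E4. repeat split; [exact Hpq | lra |].
  destruct Heps as [-> | ->]; lra.
- intros (Hpq & Hqr & Hr'). rewrite Hpq, Hqr, Hr'. f_equal; f_equal; ring.
Qed.

Lemma M2Derive_Umat_jet_eq_bracket_iff eps m a b h s : eps = 1 \/ eps = -1 ->
  smooth_on a b h -> in_I a b s ->
  M2Derive (fun t => Umat eps m (h t) (Derive h t) (Derive_n h 2 t)) s
    = M2bracket (Umat eps m (h s) (Derive h s) (Derive_n h 2 s)) (Hmat eps m (h s))
  <-> Derive (Derive_n h 2) s = 12 * h s * Derive h s.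
Proof.
intros Heps Hh Hs.
pose proof (smooth_on_Derive a b h Hh) as Hh1.
pose proof (smooth_on_Derive a b _ Hh1) as Hh2.
rewrite (M2Derive_Umat_eq_bracket_iff eps m h (Derive h) (Derive_n h 2) s Heps)
  by (eapply smooth_on_ex_derive; eassumption).
split; [tauto | intros Hh3; repeat split; exact Hh3].
Qed.

Theorem proposition3p3 (eps m : R) (Heps : eps = 1 \/ eps = -1)
  (a b : Rbar) (HI : nonempty_open_interval a b)
  (A : R -> M2) (h : R -> R)
  (HAsl : forall s, in_I a b s -> M2det (A s) = RtoC 1)
  (HAsm : smoothM2_on a b A) (Hhsm : smooth_on a b h) :
  ( integral_curve eps m a b A h (Derive h) (Derive_n h 2)
    /\ (forall s, in_I a b s -> snd (m21 (MC A s)) = 1) )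
  <->
  ( (forall s, in_I a b s -> MC A s = Hmat eps m (h s))
    /\ (forall s, in_I a b s ->
          M2Derive (fun t => Umat eps m (h t) (Derive h t) (Derive_n h 2 t)) s
          = M2bracket (Umat eps m (h s) (Derive h s) (Derive_n h 2 s)) (Hmat eps m (h s))) ).
Proof.
split.
- intros [(_ & _ & _ & _ & Hforms) Homega].
  split; intros s Hs.
  + pose proof (trace_MC_eq0 a b A s HAsl HAsm Hs) as Htr.
    destruct (Hforms s Hs) as (_ & Hb11 & Hb12 & Ha11 & Ha12 & Ha21 & _).
    apply eq_Hmat_iff. rewrite (Homega s Hs) in *. repeat (split; [assumption |]); reflexivity.
  + destruct (Hforms s Hs) as (_ & _ & _ & _ & _ & _ & _ & _ & Hh3 & _).
    rewrite (Homega s Hs) in Hh3.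
    apply (M2Derive_Umat_jet_eq_bracket_iff eps m a b h s Heps Hhsm Hs). lra.
- intros [HX HLax].
  pose proof (fun s Hs => proj1 (eq_Hmat_iff eps m (h s) (MC A s)) (HX s Hs)) as Hforms.
  pose proof (smooth_on_Derive a b h Hhsm) as Hh1.
  split.
  + split; [exact HAsm |]. split; [exact Hhsm |]. split; [exact Hh1 |].
    split; [exact (smooth_on_Derive a b _ Hh1) |].
    intros s Hs; cbv zeta.
    destruct (Hforms s Hs) as (_ & Hb11 & Hb12 & Ha11 & Ha12 & Ha21 & Homega).
    pose proof (proj1 (M2Derive_Umat_jet_eq_bracket_iff eps m a b h s Heps Hhsm Hs)
                      (HLax s Hs)) as Hh3.
    change (Derive (Derive h) s) with (Derive_n h 2 s).
    rewrite Homega in *. split; [exact (HAsl s Hs) |]. repeat split; lra.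
  + intros s Hs. apply (Hforms s Hs).
Qed.
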